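(* Let $(\lambda_j)_{j\ge1}$ be nonnegative with $\sum_j\lambda_j<\infty$ and $\lambda_j\le c\,j^{-\beta}$ for some $\beta>1$. Let $\gamma>0$ with $\beta\neq\gamma+1$, $0<\eta_0\le\bar\eta$ for a fixed constant $\bar\eta$, $\eta_i=\eta_0(1-i/N)^\gamma$ ($i=0,\dots,N-1$), $t_k=\sum_{i<k}\eta_i$, $T=t_N$, and assume $T\ge1$. Then $$\mathcal N_N:=\sum_{i=0}^{N-1}\eta_i^2\sum_{j\ge1}\lambda_j^2e^{-2\lambda_j(t_N-t_{i+1})}\lesssim\eta_0\,T^{-\min\{1-\frac1\beta,\,\frac{\gamma}{\gamma+1}\}},$$ with implicit constant independent of $N$ and $\eta_0$. *)

From Stdlib Require Import Reals.
From Coquelicot Require Import Coquelicot.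
Open Scope R_scope.

Fixpoint sumR (f : nat -> R) (n : nat) : R :=
  match n with
  | O => 0
  | S m => sumR f m + f m
  end.

Definition step (eta0 gamma : R) (N i : nat) : R :=
  eta0 * Rpower (1 - INR i / INR N) gamma.

Definition tk (eta0 gamma : R) (N k : nat) : R :=
  sumR (step eta0 gamma N) k.

(* N_N = sum_{i=0}^{N-1} eta_i^2 sum_{j>=1} lam_j^2 exp(-2 lam_j (t_N - t_{i+1})) ;
   the sequence lam is indexed from j = 1 (lam 0 is unused). *)
Definition noiseN (lam : nat -> R) (eta0 gamma : R) (N : nat) : R :=
  sumR (fun i => (step eta0 gamma N i)^2 *
     Series (fun n => (lam (S n))^2 *
        exp (-2 * lam (S n) * (tk eta0 gamma N N - tk eta0 gamma N (S i))))) N.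

(* Write G(s) = sum_j lam_j^2 exp(-2 lam_j s), so that N_N = sum_i eta_i^2 G(t_N - t_{i+1}).
   Since lam_j <= c, G is bounded by c sum_j lam_j; splitting the sum at j ~ s^(1/beta), using
   y^2 e^(-2y) <= 1 below the split and lam^2 e^(-2 lam s) <= lam / (2 s) <= c j^(-beta) / (2 s)
   above it, gives G(s) <~ s^(-a) with a = 2 - 1/beta.

   Counting steps from the end, the step with M steps after it has size <~ eta0 (M/N)^gamma and
   is followed by time >~ eta0 M^(gamma+1) / N^gamma.  With x = eta0 N, split at
   M ~ L = N x^(-1/(gamma+1)): the last L steps contribute <~ eta0^2 L^(2 gamma + 1) / N^(2 gamma)
   = eta0 x^(-gamma/(gamma+1)) by the bounded G; the earlier ones contribute
   <~ eta0 x^(1-a) N^(-(p+1)) sum_(M >= L) M^p with p = 2 gamma - a (gamma + 1).  This sum is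
   dominated by its first term when p < -1, giving x^(-gamma/(gamma+1)) again, and by its last
   term when p > -1, giving x^(1-a) = x^(-(1 - 1/beta)); p = -1 is exactly beta = gamma + 1.
   When L < 1 we have N^gamma < eta0 <= etabar, so x is bounded and the crude bound
   eta0^2 N sup G suffices.  Finally t_N <= x turns powers of x into powers of T. *)

From Stdlib Require Import Reals Lra Lia.
From Coquelicot Require Import Coquelicot.
Open Scope R_scope.

Lemma exp_le_exp x y : x <= y -> exp x <= exp y.
Proof.
intros Hxy; destruct (Rle_lt_or_eq_dec _ _ Hxy) as [Hlt | ->]; [|lra].
now left; apply exp_increasing.
Qed.

Lemma Rpower_pos x y : 0 < Rpower x y.
Proof. apply exp_pos. Qed.

Lemma Rpower_1_l y : Rpower 1 y = 1.
Proof. unfold Rpower; rewrite ln_1, Rmult_0_r; apply exp_0. Qed.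

Lemma Rle_Rpower_l_nonpos a b c : c <= 0 -> 0 < a <= b -> Rpower b c <= Rpower a c.
Proof.
intros Hc [Ha Hab]; apply exp_le_exp.
pose proof (ln_le a b Ha Hab); nra.
Qed.

Ltac pos := repeat match goal with
 | |- 0 < _ * _ => apply Rmult_lt_0_compat
 | |- 0 < / _ => apply Rinv_0_lt_compat
 | |- 0 < _ / _ => apply Rdiv_lt_0_compat
 | |- 0 < Rpower _ _ => apply Rpower_pos
 | |- 0 < exp _ => apply exp_pos
 | |- 0 < _ ^ _ => apply pow_lt
 end; try assumption; try lra.

Ltac solve_Rpower_eq :=
  apply ln_inv; [pos | pos |];
  unfold Rdiv; repeat first [ rewrite ln_mult by pos | rewrite ln_Rinv by pos
    | rewrite ln_Rpower | rewrite ln_pow by pos | rewrite ln_exp | rewrite ln_1 ];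
  simpl INR; field; lra.

Lemma Rpower_div a b y : 0 < a -> 0 < b -> Rpower (a / b) y = Rpower a y / Rpower b y.
Proof. intros; solve_Rpower_eq. Qed.

Lemma sumR_ext f g n : (forall i, (i < n)%nat -> f i = g i) -> sumR f n = sumR g n.
Proof.
induction n as [|n IH]; intros H; simpl; [easy|].
rewrite IH, H; auto; intros; apply H; lia.
Qed.

Lemma sumR_le f g n : (forall i, (i < n)%nat -> f i <= g i) -> sumR f n <= sumR g n.
Proof.
induction n as [|n IH]; intros H; simpl; [lra|].
apply Rplus_le_compat; [apply IH; intros; apply H|apply H]; lia.
Qed.

Lemma sumR_nonneg f n : (forall i, (i < n)%nat -> 0 <= f i) -> 0 <= sumR f n.
Proof.
intros H; induction n as [|n IH]; simpl; [lra|].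
assert (0 <= f n) by (apply H; lia).
assert (0 <= sumR f n) by (apply IH; intros; apply H; lia).
lra.
Qed.

Lemma sumR_add f m n : sumR f (m + n) = sumR f m + sumR (fun j => f (m + j)%nat) n.
Proof.
induction n as [|n IH]; simpl; [rewrite Nat.add_0_r; ring|].
rewrite Nat.add_succ_r; simpl; rewrite IH; ring.
Qed.

Lemma sumR_split f m n : (m <= n)%nat ->
  sumR f n = sumR f m + sumR (fun j => f (m + j)%nat) (n - m).
Proof. intros H; rewrite <- sumR_add; now replace (m + (n - m))%nat with n by lia. Qed.

Lemma sumR_le_len f m n : (m <= n)%nat -> (forall i, 0 <= f i) -> sumR f m <= sumR f n.
Proof.
intros Hmn Hf; rewrite (sumR_split f m n Hmn).
assert (0 <= sumR (fun j => f (m + j)%nat) (n - m)) by (apply sumR_nonneg; auto).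
lra.
Qed.

Lemma sumR_Sl f n : sumR f (S n) = f 0%nat + sumR (fun i => f (S i)) n.
Proof. induction n as [|n IH]; simpl in *; [ring|rewrite IH; ring]. Qed.

Lemma sumR_rev f n : sumR f n = sumR (fun i => f (n - S i)%nat) n.
Proof.
induction n as [|n IH]; [easy|].
rewrite (sumR_Sl (fun i => f (S n - S i)%nat)); simpl sumR at 1.
rewrite IH, Rplus_comm; now replace (S n - 1)%nat with n by lia.
Qed.

Lemma sumR_scal c f n : sumR (fun i => c * f i) n = c * sumR f n.
Proof. induction n as [|n IH]; simpl; [ring|rewrite IH; ring]. Qed.

Lemma sumR_const c n : sumR (fun _ => c) n = INR n * c.
Proof. induction n as [|n IH]; simpl sumR; [simpl; ring|rewrite IH, S_INR; ring]. Qed.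

Lemma Series_le_of_sumR a B : ex_series a -> (forall n, sumR a n <= B) -> Series a <= B.
Proof.
intros Ha HB.
assert (Hpart : forall n, sumR a (S n) = sum_n a n).
{ induction n as [|n IH]; [simpl; rewrite sum_O; ring|].
  rewrite sum_Sn, <- IH; reflexivity. }
apply (is_lim_seq_le (sum_n a) (fun _ => B) (Series a) B).
- intros n; rewrite <- Hpart; apply HB.
- apply Series_correct, Ha.
- apply is_lim_seq_const.
Qed.

Lemma Series_nonneg a : ex_series a -> (forall n, 0 <= a n) -> 0 <= Series a.
Proof.
intros Hs Ha; rewrite <- (Rmult_0_l (Series a)), <- Series_scal_l.
apply Series_le; [intros n; rewrite Rmult_0_l; split; [lra | apply Ha] | exact Hs].
Qed.

Lemma Rpower_succ_sub_div p v : 0 < v -> p <> -1 -> exists xi, v < xi < v + 1 /\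
  (Rpower (v + 1) (p + 1) - Rpower v (p + 1)) / (p + 1) = Rpower xi p.
Proof.
intros Hv Hp.
destruct (MVT_cor2 (fun x => Rpower x (p + 1)) (fun x => (p + 1) * Rpower x p) v (v + 1))
  as [xi [Heq Hxi]]; [lra| |].
- intros x Hx; replace p with (p + 1 - 1) at 2 by ring.
  apply derivable_pt_lim_power; lra.
- exists xi; split; [lra|]. rewrite Heq; field; lra.
Qed.

Lemma sum_pow_le_integral p u n : p <= 0 -> p <> -1 -> 0 < u ->
  sumR (fun k => Rpower (u + 1 + INR k) p) n
  <= (Rpower (u + INR n) (p + 1) - Rpower u (p + 1)) / (p + 1).
Proof.
intros Hp Hp1 Hu; induction n as [|n IH].
- simpl; rewrite Rplus_0_r; unfold Rdiv; lra.
- destruct (Rpower_succ_sub_div p (u + INR n)) as [xi [Hxi Heq]]; pose proof (pos_INR n); [lra | easy |].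
  assert (Rpower (u + 1 + INR n) p <= Rpower xi p) by (apply Rle_Rpower_l_nonpos; [|split]; lra).
  replace (u + INR (S n)) with (u + INR n + 1) by (rewrite S_INR; ring).
  replace ((Rpower (u + INR n + 1) (p + 1) - Rpower u (p + 1)) / (p + 1)) with
    ((Rpower (u + INR n) (p + 1) - Rpower u (p + 1)) / (p + 1)
     + (Rpower (u + INR n + 1) (p + 1) - Rpower (u + INR n) (p + 1)) / (p + 1))
    by (field; lra).
  simpl sumR; lra.
Qed.

Lemma sum_pow_ge_integral p u n : 0 <= p -> 0 < u ->
  (Rpower (u + INR n) (p + 1) - Rpower u (p + 1)) / (p + 1)
  <= sumR (fun k => Rpower (u + 1 + INR k) p) n.
Proof.
intros Hp Hu; induction n as [|n IH].
- simpl; rewrite Rplus_0_r; unfold Rdiv; lra.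
- destruct (Rpower_succ_sub_div p (u + INR n)) as [xi [Hxi Heq]]; pose proof (pos_INR n); [lra | lra |].
  assert (Rpower xi p <= Rpower (u + 1 + INR n) p) by (apply Rle_Rpower_l; [|split]; lra).
  replace (u + INR (S n)) with (u + INR n + 1) by (rewrite S_INR; ring).
  replace ((Rpower (u + INR n + 1) (p + 1) - Rpower u (p + 1)) / (p + 1)) with
    ((Rpower (u + INR n) (p + 1) - Rpower u (p + 1)) / (p + 1)
     + (Rpower (u + INR n + 1) (p + 1) - Rpower (u + INR n) (p + 1)) / (p + 1))
    by (field; lra).
  simpl sumR; lra.
Qed.

Lemma sum_pow_ge p n : 0 <= p -> (1 <= n)%nat ->
  Rpower (INR n) (p + 1) <= (p + 1) * sumR (fun k => Rpower (INR (S k)) p) n.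
Proof.
intros Hp Hn; destruct n as [|n]; [lia|].
rewrite sumR_Sl; simpl INR at 2; rewrite Rpower_1_l.
pose proof (sum_pow_ge_integral p 1 n Hp Rlt_0_1) as H.
rewrite Rpower_1_l in H.
rewrite (sumR_ext _ (fun k => Rpower (1 + 1 + INR k) p)) by (intros; rewrite !S_INR; f_equal; ring).
replace (INR (S n)) with (1 + INR n) by (rewrite S_INR; ring).
apply (Rmult_le_compat_l (p + 1)) in H; [|lra].
replace ((p + 1) * ((Rpower (1 + INR n) (p + 1) - 1) / (p + 1)))
  with (Rpower (1 + INR n) (p + 1) - 1) in H by (field; lra).
lra.
Qed.

Lemma sum_pow_shift_le_lt p u n : p < -1 -> 1 <= u ->
  sumR (fun k => Rpower (u + INR k) p) n <= p / (p + 1) * Rpower u (p + 1).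
Proof.
intros Hp Hu; destruct n as [|n].
- simpl; pose proof (Rpower_pos u (p + 1)).
  assert (0 < p / (p + 1)) by (apply Rdiv_neg_neg; lra). nra.
- rewrite sumR_Sl; simpl INR at 1; rewrite Rplus_0_r.
  rewrite (sumR_ext _ (fun k => Rpower (u + 1 + INR k) p)) by (intros; rewrite S_INR; f_equal; ring).
  pose proof (sum_pow_le_integral p u n ltac:(lra) ltac:(lra) ltac:(lra)) as H.
  pose proof (Rpower_pos (u + INR n) (p + 1)).
  assert (Rpower u p <= Rpower u (p + 1)) by (apply Rle_Rpower; lra).
  assert (Hdiv : (Rpower (u + INR n) (p + 1) - Rpower u (p + 1)) / (p + 1)
                 <= - Rpower u (p + 1) / (p + 1)).
  { assert (/ (p + 1) < 0) by (apply Rinv_lt_0_compat; lra). unfold Rdiv; nra. }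
  replace (p / (p + 1) * Rpower u (p + 1))
    with (Rpower u (p + 1) + - Rpower u (p + 1) / (p + 1)) by (field; lra).
  lra.
Qed.

Lemma sum_pow_shift_le_gt p u n : -1 < p -> 1 <= u ->
  sumR (fun k => Rpower (u + INR k) p) n <= (1 + / (p + 1)) * Rpower (u + INR n) (p + 1).
Proof.
intros Hp Hu.
assert (Hun : 1 <= u + INR n) by (pose proof (pos_INR n); lra).
assert (Hpos : 0 < / (p + 1)) by (apply Rinv_0_lt_compat; lra).
assert (H1 : 1 <= Rpower (u + INR n) (p + 1))
  by (apply Rle_trans with (Rpower (u + INR n) 0);
      [rewrite Rpower_O; lra | apply Rle_Rpower; lra]).
destruct (Rle_lt_dec 0 p) as [Hp0|Hp0].
- apply Rle_trans with (sumR (fun _ => Rpower (u + INR n) p) n).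
  + apply sumR_le; intros k Hk; apply Rle_Rpower_l; [lra|].
    pose proof (pos_INR k); split; [lra|]; apply Rplus_le_compat_l, le_INR; lia.
  + rewrite sumR_const, Rpower_plus, Rpower_1 by lra.
    pose proof (Rpower_pos (u + INR n) p).
    assert (INR n * Rpower (u + INR n) p <= (u + INR n) * Rpower (u + INR n) p)
      by (apply Rmult_le_compat_r; lra).
    assert (0 <= / (p + 1) * (Rpower (u + INR n) p * (u + INR n)))
      by (apply Rmult_le_pos; [|apply Rmult_le_pos]; lra).
    lra.
- destruct n as [|n]; [simpl; pose proof (Rpower_pos (u + 0) (p + 1)); nra|].
  rewrite sumR_Sl; simpl INR at 1; rewrite Rplus_0_r.
  rewrite (sumR_ext _ (fun k => Rpower (u + 1 + INR k) p)) by (intros; rewrite S_INR; f_equal; ring).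
  pose proof (sum_pow_le_integral p u n ltac:(lra) ltac:(lra) ltac:(lra)) as H.
  assert (Rpower u p <= 1) by (rewrite <- (Rpower_O u) by lra; apply Rle_Rpower; lra).
  assert (Rpower (u + INR n) (p + 1) <= Rpower (u + INR (S n)) (p + 1))
    by (apply Rle_Rpower_l; [lra|]; rewrite S_INR; pose proof (pos_INR n); lra).
  assert (Hdiv : (Rpower (u + INR n) (p + 1) - Rpower u (p + 1)) / (p + 1)
                 <= Rpower (u + INR (S n)) (p + 1) * / (p + 1)).
  { unfold Rdiv; apply Rmult_le_compat_r; [lra|]. pose proof (Rpower_pos u (p + 1)); lra. }
  lra.
Qed.

Lemma mul_exp_opp_le_1 y : 0 <= y -> y * exp (- y) <= 1.
Proof.
intros Hy; rewrite exp_Ropp.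
pose proof (exp_ineq1_le y); pose proof (exp_pos y).
apply (Rmult_le_reg_r (exp y)); [lra|].
rewrite Rmult_assoc, Rinv_l by lra; lra.
Qed.

Lemma sq_mul_exp_le_const l s c : 0 <= l -> l <= c -> 0 <= s ->
  l ^ 2 * exp (-2 * l * s) <= c * l.
Proof.
intros Hl Hc Hs.
assert (exp (-2 * l * s) <= 1) by (rewrite <- exp_0; apply exp_le_exp; nra).
pose proof (exp_pos (-2 * l * s)); nra.
Qed.

Lemma sq_mul_exp_le_inv_sq l s : 0 <= l -> 0 < s -> l ^ 2 * exp (-2 * l * s) <= / s ^ 2.
Proof.
intros Hl Hs.
assert (Hls : 0 <= l * s * exp (- (l * s)) <= 1).
{ split; [pose proof (exp_pos (- (l * s))); apply Rmult_le_pos; nra|].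
  apply mul_exp_opp_le_1; nra. }
replace (l ^ 2 * exp (-2 * l * s)) with ((l * s * exp (- (l * s))) ^ 2 / s ^ 2).
- unfold Rdiv; rewrite <- (Rmult_1_l (/ s ^ 2)) at 2.
  apply Rmult_le_compat_r; [apply Rlt_le, Rinv_0_lt_compat; nra | nra].
- replace (-2 * l * s) with (- (l * s) + - (l * s)) by ring.
  rewrite exp_plus; field; lra.
Qed.

Lemma sq_mul_exp_le_div l s : 0 <= l -> 0 < s -> l ^ 2 * exp (-2 * l * s) <= l / (2 * s).
Proof.
intros Hl Hs.
pose proof (mul_exp_opp_le_1 (2 * l * s) ltac:(nra)).
replace (l ^ 2 * exp (-2 * l * s)) with (l / (2 * s) * (2 * l * s * exp (- (2 * l * s))))
  by (replace (- (2 * l * s)) with (-2 * l * s) by ring; field; lra).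
assert (0 <= l / (2 * s)) by (apply Rmult_le_pos; [lra | apply Rlt_le, Rinv_0_lt_compat; lra]).
nra.
Qed.

Definition spectral_term (lam : nat -> R) (s : R) (n : nat) : R :=
  lam (S n) ^ 2 * exp (-2 * lam (S n) * s).

Definition spectral_sum (lam : nat -> R) (s : R) : R := Series (spectral_term lam s).

Section SpectralSum.

Variables (lam : nat -> R) (c beta : R).
Hypothesis lam_nonneg : forall j, (1 <= j)%nat -> 0 <= lam j.
Hypothesis lam_summable : ex_series (fun n => lam (S n)).
Hypothesis lam_le_pow : forall j, (1 <= j)%nat -> lam j <= c * Rpower (INR j) (- beta).
Hypothesis beta_gt_1 : 1 < beta.

Lemma c_nonneg : 0 <= c.
Proof.
pose proof (lam_nonneg 1 (le_n 1)); pose proof (lam_le_pow 1 (le_n 1)).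
simpl INR in *; rewrite Rpower_1_l in *; lra.
Qed.

Lemma lam_le_c j : (1 <= j)%nat -> lam j <= c.
Proof.
intros Hj.
assert (Rpower (INR j) (- beta) <= 1).
{ rewrite <- (Rpower_O (INR j)) by (apply lt_0_INR; lia).
  apply Rle_Rpower; [apply (le_INR 1); lia | lra]. }
pose proof c_nonneg; pose proof (lam_le_pow j Hj); nra.
Qed.

Lemma spectral_term_le s n : 0 <= s -> 0 <= spectral_term lam s n <= c * lam (S n).
Proof.
intros Hs; unfold spectral_term; split.
- pose proof (exp_pos (-2 * lam (S n) * s)); apply Rmult_le_pos; [apply pow2_ge_0 | lra].
- apply sq_mul_exp_le_const; auto; [apply lam_nonneg | apply lam_le_c]; lia.
Qed.

Lemma ex_series_spectral s : 0 <= s -> ex_series (spectral_term lam s).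
Proof.
intros Hs.
apply (@ex_series_le R_AbsRing R_CompleteNormedModule _ (fun n => c * lam (S n))).
- intros n; destruct (spectral_term_le s n Hs).
  change (Rabs (spectral_term lam s n) <= c * lam (S n)); rewrite Rabs_pos_eq; lra.
- exact (ex_series_scal c _ lam_summable).
Qed.

Lemma spectral_sum_le_const s : 0 <= s -> spectral_sum lam s <= c * Series (fun n => lam (S n)).
Proof.
intros Hs; rewrite <- Series_scal_l.
apply Series_le; [intros n; apply spectral_term_le, Hs|].
exact (ex_series_scal c _ lam_summable).
Qed.

Lemma spectral_head_le s n : 0 < s -> sumR (spectral_term lam s) n <= INR n / s ^ 2.
Proof.
intros Hs; unfold Rdiv; rewrite <- sumR_const; apply sumR_le; intros i _.
apply sq_mul_exp_le_inv_sq; [apply lam_nonneg; lia | lra].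
Qed.

Lemma spectral_tail_le s J n : 0 < s -> 0 < INR J ->
  sumR (fun k => spectral_term lam s (J + k)) n
  <= c / (2 * s) * (Rpower (INR J) (1 - beta) / (beta - 1)).
Proof.
intros Hs HJ.
apply Rle_trans with (c / (2 * s) * sumR (fun k => Rpower (INR J + 1 + INR k) (- beta)) n).
- rewrite <- sumR_scal; apply sumR_le; intros k _; unfold spectral_term.
  eapply Rle_trans; [apply sq_mul_exp_le_div; [apply lam_nonneg; lia | lra]|].
  replace (INR J + 1 + INR k) with (INR (S (J + k))) by (rewrite S_INR, plus_INR; ring).
  unfold Rdiv; rewrite Rmult_assoc, (Rmult_comm (/ (2 * s))), <- Rmult_assoc.
  apply Rmult_le_compat_r; [apply Rlt_le, Rinv_0_lt_compat; lra|].
  apply lam_le_pow; lia.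
- apply Rmult_le_compat_l; [apply Rmult_le_pos; [apply c_nonneg | apply Rlt_le; pos]|].
  pose proof (sum_pow_le_integral (- beta) (INR J) n ltac:(lra) ltac:(lra) HJ) as Hint.
  replace (- beta + 1) with (1 - beta) in Hint by ring.
  eapply Rle_trans; [exact Hint|].
  replace ((Rpower (INR J + INR n) (1 - beta) - Rpower (INR J) (1 - beta)) / (1 - beta))
    with (Rpower (INR J) (1 - beta) / (beta - 1) - Rpower (INR J + INR n) (1 - beta) / (beta - 1))
    by (field; lra).
  assert (0 < Rpower (INR J + INR n) (1 - beta) / (beta - 1)) by pos.
  lra.
Qed.

Lemma spectral_sum_le_pow s : 1 <= s ->
  spectral_sum lam s
  <= (1 + c * Rpower 2 (beta - 1) / (2 * (beta - 1))) * Rpower s (- (2 - 1 / beta)).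
Proof.
intros Hs.
set (y := Rpower s (1 / beta)).
assert (Hy : 1 <= y).
{ unfold y; rewrite <- (Rpower_O s) at 1 by lra.
  apply Rle_Rpower; [lra | apply Rlt_le, Rdiv_lt_0_compat; lra]. }
destruct (nfloor_ex y ltac:(lra)) as [J [HJy HyJ]].
assert (HJ : 1 <= INR J) by (destruct J; [simpl in HyJ; lra | apply (le_INR 1); lia]).
assert (Hhead : sumR (spectral_term lam s) J <= Rpower s (- (2 - 1 / beta))).
{ eapply Rle_trans; [apply spectral_head_le; lra|].
  apply Rle_trans with (y / s ^ 2);
    [apply Rmult_le_compat_r; [apply Rlt_le, Rinv_0_lt_compat; nra | lra]|].
  right; unfold y; solve_Rpower_eq. }
assert (Htail : forall n, sumR (fun k => spectral_term lam s (J + k)) n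
          <= c * Rpower 2 (beta - 1) / (2 * (beta - 1)) * Rpower s (- (2 - 1 / beta))).
{ intros n; eapply Rle_trans; [apply spectral_tail_le; lra|].
  assert (HJpow : Rpower (INR J) (1 - beta) <= Rpower (y / 2) (1 - beta))
    by (apply Rle_Rpower_l_nonpos; lra).
  apply Rle_trans with (c / (2 * s) * (Rpower (y / 2) (1 - beta) / (beta - 1))).
  - pose proof c_nonneg; apply Rmult_le_compat_l; [apply Rmult_le_pos; [lra | apply Rlt_le; pos]|].
    unfold Rdiv; apply Rmult_le_compat_r; [apply Rlt_le; pos | exact HJpow].
  - pose proof c_nonneg; right.
    replace (c / (2 * s) * (Rpower (y / 2) (1 - beta) / (beta - 1)))
      with (c / (2 * (beta - 1)) * (Rpower (y / 2) (1 - beta) / s)) by (field; lra).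
    replace (c * Rpower 2 (beta - 1) / (2 * (beta - 1)) * Rpower s (- (2 - 1 / beta)))
      with (c / (2 * (beta - 1)) * (Rpower 2 (beta - 1) * Rpower s (- (2 - 1 / beta)))) by (field; lra).
    f_equal; unfold y; solve_Rpower_eq. }
apply Series_le_of_sumR; [apply ex_series_spectral; lra|]; intros n.
apply Rle_trans with (sumR (spectral_term lam s) (J + n)).
{ apply sumR_le_len; [lia|]; intros i; apply spectral_term_le; lra. }
rewrite sumR_add; specialize (Htail n); lra.
Qed.

Lemma spectral_sum_decay : exists K, 0 <= K /\
  (forall s, 0 <= s -> spectral_sum lam s <= K) /\
  (forall s, 0 < s -> spectral_sum lam s <= K * Rpower s (- (2 - 1 / beta))).
Proof.
pose proof c_nonneg as Hc.
set (K0 := c * Series (fun n => lam (S n))).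
set (K1 := 1 + c * Rpower 2 (beta - 1) / (2 * (beta - 1))).
assert (HK0 : 0 <= K0).
{ apply Rmult_le_pos; [lra | apply Series_nonneg; [exact lam_summable | intros; apply lam_nonneg; lia]]. }
assert (HK1 : 0 <= K1).
{ assert (0 <= c * Rpower 2 (beta - 1) / (2 * (beta - 1))); [|unfold K1; lra].
  apply Rmult_le_pos; [pose proof (Rpower_pos 2 (beta - 1)); nra | apply Rlt_le; pos]. }
exists (K0 + K1); split; [lra|split].
- intros s Hs; pose proof (spectral_sum_le_const s Hs) as Hle; fold K0 in Hle; lra.
- intros s Hs; set (a := 2 - 1 / beta).
  assert (0 < 1 / beta < 1) by (split; [pos | apply (Rmult_lt_reg_r beta); field_simplify; lra]).
  pose proof (Rpower_pos s (- a)).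
  destruct (Rle_lt_dec 1 s) as [Hs1|Hs1].
  + pose proof (spectral_sum_le_pow s Hs1) as Hle; fold K1 a in Hle; nra.
  + assert (1 <= Rpower s (- a)).
    { rewrite <- (Rpower_1_l (- a)); apply Rle_Rpower_l_nonpos; [unfold a|split]; lra. }
    pose proof (spectral_sum_le_const s ltac:(lra)) as Hle; fold K0 in Hle; nra.
Qed.

End SpectralSum.

Section StepSchedule.

Variables (eta0 gamma : R) (N : nat).
Hypothesis eta0_pos : 0 < eta0.
Hypothesis gamma_nonneg : 0 <= gamma.

Lemma step_eq i : (i < N)%nat -> step eta0 gamma N i = eta0 * Rpower (INR (N - i) / INR N) gamma.
Proof.
intros Hi; unfold step; rewrite minus_INR by lia.
assert (0 < INR N) by (apply lt_0_INR; lia).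
do 2 f_equal; field; lra.
Qed.

Lemma step_pos_le i : (i < N)%nat -> 0 < step eta0 gamma N i <= eta0.
Proof.
intros Hi; rewrite step_eq by exact Hi.
assert (0 < INR N) by (apply lt_0_INR; lia).
assert (0 < INR (N - i)) by (apply lt_0_INR; lia).
assert (INR (N - i) <= INR N) by (apply le_INR; lia).
assert (Rpower (INR (N - i) / INR N) gamma <= 1).
{ rewrite <- (Rpower_1_l gamma); apply Rle_Rpower_l; [lra|split; [pos|]].
  apply Rmult_le_reg_r with (INR N); [lra|]; field_simplify; lra. }
split; [pos|]; pose proof (Rpower_pos (INR (N - i) / INR N) gamma); nra.
Qed.

Lemma tk_N_le : tk eta0 gamma N N <= eta0 * INR N.
Proof.
unfold tk; rewrite Rmult_comm, <- sumR_const.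
apply sumR_le; intros i Hi; apply step_pos_le, Hi.
Qed.

Lemma tk_gap_eq i : (i < N)%nat ->
  tk eta0 gamma N N - tk eta0 gamma N (S i) = sumR (fun l => step eta0 gamma N (S i + l)) (N - S i).
Proof. intros Hi; unfold tk; rewrite (sumR_split _ (S i) N) by lia; ring. Qed.

Lemma tk_gap_nonneg i : (i < N)%nat -> 0 <= tk eta0 gamma N N - tk eta0 gamma N (S i).
Proof.
intros Hi; rewrite tk_gap_eq by exact Hi.
apply sumR_nonneg; intros l Hl; apply Rlt_le, step_pos_le; lia.
Qed.

Lemma tk_gap_ge i : (S i < N)%nat ->
  eta0 * Rpower (INR (N - S i)) (gamma + 1) / ((gamma + 1) * Rpower (INR N) gamma)
  <= tk eta0 gamma N N - tk eta0 gamma N (S i).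
Proof.
intros Hi; rewrite tk_gap_eq by lia.
assert (HN : 0 < INR N) by (apply lt_0_INR; lia).
rewrite sumR_rev.
rewrite (sumR_ext _ (fun l => eta0 / Rpower (INR N) gamma * Rpower (INR (S l)) gamma)).
2:{ intros l Hl; rewrite step_eq by lia.
    replace (N - (S i + (N - S i - S l)))%nat with (S l) by lia.
    rewrite Rpower_div by (apply lt_0_INR; lia).
    field; apply Rgt_not_eq, Rpower_pos. }
rewrite sumR_scal.
pose proof (sum_pow_ge gamma (N - S i) gamma_nonneg ltac:(lia)).
pose proof (Rpower_pos (INR N) gamma).
apply (Rmult_le_reg_l ((gamma + 1) * Rpower (INR N) gamma)); [pos|].
field_simplify; [|lra..].
nra.
Qed.

End StepSchedule.

(* [noiseN lam] is [noise_sum (spectral_sum lam)] up to conversion. *)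
Definition noise_sum (G : R -> R) (eta0 gamma : R) (N : nat) : R :=
  sumR (fun i => (step eta0 gamma N i) ^ 2 * G (tk eta0 gamma N N - tk eta0 gamma N (S i))) N.

Section NoiseSum.

Variables (G : R -> R) (K a eta0 gamma : R) (N : nat).
Hypothesis K_nonneg : 0 <= K.
Hypothesis G_le_K : forall s, 0 <= s -> G s <= K.
Hypothesis G_le_pow : forall s, 0 < s -> G s <= K * Rpower s (- a).
Hypothesis a_nonneg : 0 <= a.
Hypothesis eta0_pos : 0 < eta0.
Hypothesis gamma_nonneg : 0 <= gamma.

Let x := eta0 * INR N.
Let p := 2 * gamma - a * (gamma + 1).

Lemma noise_term_le_K i : (i < N)%nat ->
  (step eta0 gamma N i) ^ 2 * G (tk eta0 gamma N N - tk eta0 gamma N (S i))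
  <= K * (step eta0 gamma N i) ^ 2.
Proof.
intros Hi; rewrite Rmult_comm; apply Rmult_le_compat_r; [apply pow2_ge_0|].
apply G_le_K, tk_gap_nonneg; auto.
Qed.

Lemma noise_sum_le_crude : noise_sum G eta0 gamma N <= K * eta0 * x.
Proof.
unfold x; replace (K * eta0 * (eta0 * INR N)) with (INR N * (K * eta0 ^ 2)) by ring.
rewrite <- sumR_const; apply sumR_le; intros i Hi.
eapply Rle_trans; [apply noise_term_le_K, Hi|].
apply Rmult_le_compat_l; [exact K_nonneg|].
destruct (step_pos_le eta0 gamma N eta0_pos gamma_nonneg i Hi); apply pow_incr; lra.
Qed.

Lemma noise_term_le i : (S i < N)%nat ->
  (step eta0 gamma N i) ^ 2 * G (tk eta0 gamma N N - tk eta0 gamma N (S i))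
  <= K * Rpower 2 (2 * gamma) * Rpower (gamma + 1) a
     * eta0 * Rpower x (1 - a) * Rpower (INR N) (- (p + 1)) * Rpower (INR (N - S i)) p.
Proof.
intros Hi.
assert (HN : 0 < INR N) by (apply lt_0_INR; lia).
set (M := INR (N - S i)).
assert (HM : 1 <= M) by (apply (le_INR 1); lia).
set (sig := eta0 * Rpower M (gamma + 1) / ((gamma + 1) * Rpower (INR N) gamma)).
assert (Hsig : 0 < sig) by (unfold sig; pos).
assert (HG : G (tk eta0 gamma N N - tk eta0 gamma N (S i)) <= K * Rpower sig (- a)).
{ pose proof (tk_gap_ge eta0 gamma N eta0_pos gamma_nonneg i Hi) as Hgap; fold M sig in Hgap.
  eapply Rle_trans; [apply G_le_pow; lra|].
  apply Rmult_le_compat_l; [exact K_nonneg|]. apply Rle_Rpower_l_nonpos; lra. }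
assert (Hstep : (step eta0 gamma N i) ^ 2 <= (eta0 * Rpower (2 * M / INR N) gamma) ^ 2).
{ destruct (step_pos_le eta0 gamma N eta0_pos gamma_nonneg i ltac:(lia)).
  apply pow_incr; split; [lra|].
  rewrite step_eq by lia; apply Rmult_le_compat_l; [lra|].
  apply Rle_Rpower_l; [lra|split; [apply Rdiv_lt_0_compat; [apply lt_0_INR; lia | lra]|]].
  unfold Rdiv; apply Rmult_le_compat_r; [apply Rlt_le, Rinv_0_lt_compat; lra|].
  replace (INR (N - i)) with (M + 1) by (unfold M; rewrite <- S_INR; f_equal; lia); lra. }
assert (Hpow : (eta0 * Rpower (2 * M / INR N) gamma) ^ 2 * Rpower sig (- a)
  = Rpower 2 (2 * gamma) * Rpower (gamma + 1) a
    * eta0 * Rpower x (1 - a) * Rpower (INR N) (- (p + 1)) * Rpower M p).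
{ unfold sig, x, p; solve_Rpower_eq. }
apply Rle_trans with ((eta0 * Rpower (2 * M / INR N) gamma) ^ 2 * (K * Rpower sig (- a))).
- apply Rle_trans with ((step eta0 gamma N i) ^ 2 * (K * Rpower sig (- a))).
  + apply Rmult_le_compat_l; [apply pow2_ge_0 | exact HG].
  + apply Rmult_le_compat_r; [pose proof (Rpower_pos sig (- a)); nra | exact Hstep].
- right; transitivity (K * ((eta0 * Rpower (2 * M / INR N) gamma) ^ 2 * Rpower sig (- a))); [ring|].
  rewrite Hpow; ring.
Qed.

Lemma noise_sum_split_le L : (1 <= L <= N)%nat ->
  noise_sum G eta0 gamma N
  <= K * eta0 ^ 2 * INR L * Rpower (INR L / INR N) (2 * gamma)
   + K * Rpower 2 (2 * gamma) * Rpower (gamma + 1) a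
     * eta0 * Rpower x (1 - a) * Rpower (INR N) (- (p + 1))
     * sumR (fun j => Rpower (INR L + INR j) p) (N - L).
Proof.
intros HL; unfold noise_sum; rewrite sumR_rev, (sumR_split _ L N) by lia.
assert (HN : 0 < INR N) by (apply lt_0_INR; lia).
apply Rplus_le_compat.
- replace (K * eta0 ^ 2 * INR L * Rpower (INR L / INR N) (2 * gamma))
    with (INR L * (K * (eta0 * Rpower (INR L / INR N) gamma) ^ 2))
    by (replace (2 * gamma) with (gamma + gamma) by ring; rewrite Rpower_plus; ring).
  rewrite <- sumR_const; apply sumR_le; intros m Hm.
  eapply Rle_trans; [apply noise_term_le_K; lia|].
  apply Rmult_le_compat_l; [exact K_nonneg|].
  destruct (step_pos_le eta0 gamma N eta0_pos gamma_nonneg (N - S m) ltac:(lia)).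
  apply pow_incr; split; [lra|].
  rewrite step_eq by lia; apply Rmult_le_compat_l; [lra|].
  replace (N - (N - S m))%nat with (S m) by lia.
  apply Rle_Rpower_l; [lra | split; [pos; apply lt_0_INR; lia|]].
  unfold Rdiv; apply Rmult_le_compat_r; [apply Rlt_le, Rinv_0_lt_compat; lra|].
  apply le_INR; lia.
- rewrite <- sumR_scal; apply sumR_le; intros j Hj.
  rewrite <- plus_INR.
  replace (INR (L + j)) with (INR (N - S (N - S (L + j)))) by (f_equal; lia).
  apply noise_term_le; lia.
Qed.

End NoiseSum.

Section NoiseRate.

Variables (G : R -> R) (K a etabar eta0 gamma : R) (N : nat).
Hypothesis K_nonneg : 0 <= K.
Hypothesis G_le_K : forall s, 0 <= s -> G s <= K.
Hypothesis G_le_pow : forall s, 0 < s -> G s <= K * Rpower s (- a).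
Hypothesis a_gt_1 : 1 < a.
Hypothesis gamma_pos : 0 < gamma.
Hypothesis eta0_pos : 0 < eta0.
Hypothesis eta0_le : eta0 <= etabar.

Let x := eta0 * INR N.
Let theta := Rpower x (- 1 / (gamma + 1)).
Let p := 2 * gamma - a * (gamma + 1).
Let m := Rmin (a - 1) (gamma / (gamma + 1)).

Hypothesis x_ge_1 : 1 <= x.
Hypothesis p_neq : p <> -1.

Lemma INR_N_pos : 0 < INR N.
Proof.
destruct N; [unfold x in x_ge_1; simpl in x_ge_1; lra|].
apply lt_0_INR; lia.
Qed.

Lemma noise_head_le L : (1 <= L)%nat -> INR L <= INR N * theta ->
  K * eta0 ^ 2 * INR L * Rpower (INR L / INR N) (2 * gamma)
  <= K * eta0 * Rpower x (- (gamma / (gamma + 1))).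
Proof.
intros HL HLt; pose proof INR_N_pos as HN.
assert (HL0 : 0 < INR L) by (apply lt_0_INR; lia).
assert (Hpow : Rpower (INR L / INR N) (2 * gamma) <= Rpower theta (2 * gamma)).
{ apply Rle_Rpower_l; [lra | split; [pos|]].
  apply (Rmult_le_reg_r (INR N)); [lra|]; field_simplify; lra. }
assert (Hid : eta0 ^ 2 * (INR N * theta) * Rpower theta (2 * gamma)
              = eta0 * Rpower x (- (gamma / (gamma + 1)))).
{ unfold theta, x; solve_Rpower_eq. }
apply Rle_trans with (K * (eta0 ^ 2 * ((INR N * theta) * Rpower theta (2 * gamma)))).
- replace (K * eta0 ^ 2 * INR L * Rpower (INR L / INR N) (2 * gamma))
    with (K * (eta0 ^ 2 * (INR L * Rpower (INR L / INR N) (2 * gamma)))) by ring.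
  apply Rmult_le_compat_l; [exact K_nonneg|].
  apply Rmult_le_compat_l; [apply pow2_ge_0|].
  apply Rmult_le_compat; [lra | pose proof (Rpower_pos (INR L / INR N) (2 * gamma)); lra | lra | lra].
- right; transitivity (K * (eta0 ^ 2 * (INR N * theta) * Rpower theta (2 * gamma))); [ring | rewrite Hid; ring].
Qed.

Lemma tail_scale_le L : p < -1 -> 1 <= INR L -> INR N * theta <= 2 * INR L ->
  Rpower x (1 - a) * Rpower (INR N) (- (p + 1)) * Rpower (INR L) (p + 1)
  <= Rpower 2 (- (p + 1)) * Rpower x (- (gamma / (gamma + 1))).
Proof.
intros Hp HL1 HLt; pose proof INR_N_pos as HN.
apply Rle_trans with (Rpower x (1 - a) * Rpower (theta / 2) (p + 1)).
- replace (Rpower x (1 - a) * Rpower (INR N) (- (p + 1)) * Rpower (INR L) (p + 1))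
    with (Rpower x (1 - a) * Rpower (INR L / INR N) (p + 1)) by solve_Rpower_eq.
  apply Rmult_le_compat_l; [apply Rlt_le, Rpower_pos|].
  apply Rle_Rpower_l_nonpos; [lra | split; [unfold theta; pos|]].
  apply (Rmult_le_reg_r (2 * INR N)); [lra|]; field_simplify; lra.
- right; unfold theta, p; solve_Rpower_eq.
Qed.

Lemma noise_tail_le L : (1 <= L <= N)%nat -> INR N * theta <= 2 * INR L ->
  Rpower x (1 - a) * Rpower (INR N) (- (p + 1)) * sumR (fun j => Rpower (INR L + INR j) p) (N - L)
  <= Rmax (p / (p + 1) * Rpower 2 (- (p + 1))) (1 + / (p + 1)) * Rpower x (- m).
Proof.
intros HL HLt; pose proof INR_N_pos as HN.
assert (HL1 : 1 <= INR L) by (apply (le_INR 1); lia).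
assert (Hm : m <= a - 1 /\ m <= gamma / (gamma + 1)) by (split; [apply Rmin_l | apply Rmin_r]).
pose proof (Rpower_pos x (1 - a)); pose proof (Rpower_pos (INR N) (- (p + 1))).
destruct (Rlt_le_dec p (-1)) as [Hp | Hp].
- assert (Hc : 0 < p / (p + 1)) by (apply Rdiv_neg_neg; lra).
  pose proof (sum_pow_shift_le_lt p (INR L) (N - L) Hp HL1) as Hsum.
  pose proof (tail_scale_le L Hp HL1 HLt) as Hscale.
  assert (Rpower x (- (gamma / (gamma + 1))) <= Rpower x (- m)) by (apply Rle_Rpower; lra).
  pose proof (Rpower_pos 2 (- (p + 1))).
  apply Rle_trans with (Rpower x (1 - a) * Rpower (INR N) (- (p + 1))
                        * (p / (p + 1) * Rpower (INR L) (p + 1))).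
  { apply Rmult_le_compat_l; [apply Rmult_le_pos; lra | exact Hsum]. }
  apply Rle_trans with (p / (p + 1) * (Rpower 2 (- (p + 1)) * Rpower x (- m))).
  { replace (Rpower x (1 - a) * Rpower (INR N) (- (p + 1)) * (p / (p + 1) * Rpower (INR L) (p + 1)))
      with (p / (p + 1) * (Rpower x (1 - a) * Rpower (INR N) (- (p + 1)) * Rpower (INR L) (p + 1)))
      by ring.
    apply Rmult_le_compat_l; [lra|].
    eapply Rle_trans; [exact Hscale|]; apply Rmult_le_compat_l; lra. }
  rewrite <- Rmult_assoc; apply Rmult_le_compat_r; [apply Rlt_le, Rpower_pos | apply Rmax_l].
- assert (Hp' : -1 < p) by (destruct Hp; [lra | congruence]).
  assert (Hc : 0 < 1 + / (p + 1)) by (pose proof (Rinv_0_lt_compat (p + 1) ltac:(lra)); lra).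
  pose proof (sum_pow_shift_le_gt p (INR L) (N - L) Hp' HL1) as Hsum.
  rewrite <- plus_INR, Nat.add_comm, Nat.sub_add in Hsum by lia.
  apply Rle_trans with ((1 + / (p + 1)) * Rpower x (1 - a)).
  + replace ((1 + / (p + 1)) * Rpower x (1 - a)) with
      (Rpower x (1 - a) * Rpower (INR N) (- (p + 1)) * ((1 + / (p + 1)) * Rpower (INR N) (p + 1)))
      by (rewrite Rpower_Ropp; field; split; [lra | apply Rgt_not_eq, Rpower_pos]).
    apply Rmult_le_compat_l; [apply Rmult_le_pos; lra | exact Hsum].
  + apply Rmult_le_compat; [lra | lra | apply Rmax_r | apply Rle_Rpower; lra].
Qed.

Lemma noise_sum_le_large : 1 <= INR N * theta ->
  noise_sum G eta0 gamma N
  <= (K + K * Rpower 2 (2 * gamma) * Rpower (gamma + 1) a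
          * Rmax (p / (p + 1) * Rpower 2 (- (p + 1))) (1 + / (p + 1)))
     * eta0 * Rpower x (- m).
Proof.
intros Hlarge; pose proof INR_N_pos as HN.
assert (Htheta : theta <= 1).
{ unfold theta; apply Rle_trans with (Rpower x 0); [|rewrite Rpower_O; lra].
  apply Rle_Rpower; [lra|].
  assert (0 < / (gamma + 1)) by (apply Rinv_0_lt_compat; lra); unfold Rdiv; nra. }
destruct (nfloor_ex (INR N * theta) ltac:(lra)) as [L [HL1 HL2]].
assert (HL : (1 <= L)%nat) by (destruct L; [simpl in HL2; lra | lia]).
assert (HLN : (L <= N)%nat) by (apply INR_le; nra).
assert (HL2' : INR N * theta <= 2 * INR L) by (pose proof (le_INR 1 L HL); simpl in *; lra).
pose proof (noise_sum_split_le G K a eta0 gamma N K_nonneg G_le_K G_le_pow ltac:(lra)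
  eta0_pos ltac:(lra) L ltac:(lia)) as Hsplit.
pose proof (noise_head_le L HL HL1) as Hhead.
pose proof (noise_tail_le L ltac:(lia) HL2') as Htail.
fold x p in Hsplit.
assert (Rpower x (- (gamma / (gamma + 1))) <= Rpower x (- m)).
{ apply Rle_Rpower; [lra|]; apply Ropp_le_contravar, Rmin_r. }
set (Kb := K * Rpower 2 (2 * gamma) * Rpower (gamma + 1) a) in *.
set (Ct := Rmax (p / (p + 1) * Rpower 2 (- (p + 1))) (1 + / (p + 1))) in *.
assert (HKb : 0 <= Kb) by (unfold Kb; pose proof (Rpower_pos 2 (2 * gamma));
  pose proof (Rpower_pos (gamma + 1) a); apply Rmult_le_pos; [apply Rmult_le_pos|]; lra).
eapply Rle_trans; [exact Hsplit|].
replace ((K + Kb * Ct) * eta0 * Rpower x (- m))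
  with (K * eta0 * Rpower x (- m) + Kb * eta0 * (Ct * Rpower x (- m))) by ring.
apply Rplus_le_compat.
- eapply Rle_trans; [exact Hhead|].
  rewrite !Rmult_assoc; apply Rmult_le_compat_l; [lra|]; apply Rmult_le_compat_l; lra.
- rewrite !Rmult_assoc; apply Rmult_le_compat_l; [lra|]; apply Rmult_le_compat_l; [lra|].
  rewrite <- !Rmult_assoc; exact Htail.
Qed.

Lemma noise_sum_le_small : INR N * theta < 1 ->
  noise_sum G eta0 gamma N
  <= K * Rpower (Rpower etabar ((gamma + 1) / gamma)) (1 + m) * eta0 * Rpower x (- m).
Proof.
intros Hsmall; pose proof INR_N_pos as HN.
(* N^gamma < eta0 <= etabar: the only place where the bound on the initial step is needed. *)
set (X0 := Rpower etabar ((gamma + 1) / gamma)).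
assert (HxX0 : x <= X0).
{ assert (Hlog : ln (INR N * theta) < 0) by (rewrite <- ln_1; apply ln_increasing; [unfold theta; pos | lra]).
  unfold theta in Hlog; rewrite ln_mult, ln_Rpower in Hlog by pos.
  unfold x in Hlog; rewrite ln_mult in Hlog by lra.
  pose proof (ln_le eta0 etabar eta0_pos eta0_le).
  destruct (Rle_lt_dec x X0) as [|HX0]; [easy|exfalso].
  apply ln_increasing in HX0; [|unfold X0; pos].
  unfold X0, x in HX0; rewrite ln_Rpower, ln_mult in HX0 by lra.
  assert (H1 : gamma * ln (INR N) < ln eta0).
  { apply (Rmult_lt_compat_l (gamma + 1)) in Hlog; [|lra].
    replace ((gamma + 1) * (ln (INR N) + -1 / (gamma + 1) * (ln eta0 + ln (INR N))))
      with (gamma * ln (INR N) - ln eta0) in Hlog by (field; lra).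
    lra. }
  apply (Rmult_lt_compat_l gamma) in HX0; [|lra].
  replace (gamma * ((gamma + 1) / gamma * ln etabar)) with ((gamma + 1) * ln etabar)
    in HX0 by (field; lra).
  assert ((gamma + 1) * ln eta0 <= (gamma + 1) * ln etabar) by (apply Rmult_le_compat_l; lra).
  lra. }
eapply Rle_trans; [apply (noise_sum_le_crude G K eta0 gamma N K_nonneg G_le_K eta0_pos ltac:(lra))|].
fold x.
assert (Hm : 0 < m) by (unfold m; apply Rmin_glb_lt; [lra | pos]).
replace (K * eta0 * x) with (K * eta0 * (Rpower x (1 + m) * Rpower x (- m)))
  by (rewrite <- Rpower_plus; replace (1 + m + - m) with 1 by ring; rewrite Rpower_1; lra).
replace (K * Rpower X0 (1 + m) * eta0 * Rpower x (- m))
  with (K * eta0 * (Rpower X0 (1 + m) * Rpower x (- m))) by ring.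
apply Rmult_le_compat_l; [apply Rmult_le_pos; lra|].
apply Rmult_le_compat_r; [apply Rlt_le, Rpower_pos|].
apply Rle_Rpower_l; lra.
Qed.

End NoiseRate.

Lemma noise_sum_le (G : R -> R) (K a gamma etabar : R) :
  0 <= K -> (forall s, 0 <= s -> G s <= K) -> (forall s, 0 < s -> G s <= K * Rpower s (- a)) ->
  1 < a -> 0 < gamma -> 2 * gamma - a * (gamma + 1) <> -1 ->
  exists C, 0 < C /\ forall (N : nat) (eta0 : R), 0 < eta0 -> eta0 <= etabar -> 1 <= eta0 * INR N ->
    noise_sum G eta0 gamma N
    <= C * eta0 * Rpower (eta0 * INR N) (- Rmin (a - 1) (gamma / (gamma + 1))).
Proof.
intros HK HGK HGa Ha Hg Hp.
set (p := 2 * gamma - a * (gamma + 1)) in Hp.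
set (m := Rmin (a - 1) (gamma / (gamma + 1))).
set (C_large := K + K * Rpower 2 (2 * gamma) * Rpower (gamma + 1) a
                      * Rmax (p / (p + 1) * Rpower 2 (- (p + 1))) (1 + / (p + 1))).
set (C_small := K * Rpower (Rpower etabar ((gamma + 1) / gamma)) (1 + m)).
exists (1 + Rabs C_large + Rabs C_small); split;
  [pose proof (Rabs_pos C_large); pose proof (Rabs_pos C_small); lra|].
intros N eta0 He Hbar Hx.
assert (Hbound : exists C, C <= 1 + Rabs C_large + Rabs C_small /\
  noise_sum G eta0 gamma N <= C * eta0 * Rpower (eta0 * INR N) (- m)).
{ destruct (Rlt_le_dec (INR N * Rpower (eta0 * INR N) (- 1 / (gamma + 1))) 1) as [Hs | Hl].
  - exists C_small; split; [pose proof (Rle_abs C_small); pose proof (Rabs_pos C_large); lra|].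
    exact (noise_sum_le_small G K a etabar eta0 gamma N HK HGK ltac:(lra) Hg He Hbar Hx Hs).
  - exists C_large; split; [pose proof (Rle_abs C_large); pose proof (Rabs_pos C_small); lra|].
    exact (noise_sum_le_large G K a eta0 gamma N HK HGK HGa Ha Hg He Hx Hp Hl). }
destruct Hbound as [C [HC Hle]].
eapply Rle_trans; [exact Hle|].
apply Rmult_le_compat_r; [apply Rlt_le, Rpower_pos|].
apply Rmult_le_compat_r; lra.
Qed.

Theorem mainTheorem16 (lam : nat -> R) (c beta gamma etabar : R)
  (Hnn : forall j : nat, (1 <= j)%nat -> 0 <= lam j)
  (Hsum : ex_series (fun n => lam (S n)))
  (Hdec : forall j : nat, (1 <= j)%nat -> lam j <= c * Rpower (INR j) (- beta))
  (Hbeta : 1 < beta) (Hgamma : 0 < gamma) (Hbg : beta <> gamma + 1) :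
  exists C : R, 0 < C /\
    forall (N : nat) (eta0 : R),
      0 < eta0 -> eta0 <= etabar ->
      1 <= tk eta0 gamma N N ->
      noiseN lam eta0 gamma N <=
        C * eta0 * Rpower (tk eta0 gamma N N)
                     (- Rmin (1 - 1 / beta) (gamma / (gamma + 1))).
Proof.
destruct (spectral_sum_decay lam c beta Hnn Hsum Hdec Hbeta) as [K [HK [HK0 HKa]]].
assert (Hib : 0 < 1 / beta < 1) by (split; [pos | apply (Rmult_lt_reg_r beta); field_simplify; lra]).
assert (Hp : 2 * gamma - (2 - 1 / beta) * (gamma + 1) <> -1).
{ intros Hp; apply Hbg; field_simplify in Hp; [|lra].
  unfold Rdiv in Hp; apply (Rmult_eq_compat_r beta) in Hp.
  rewrite Rmult_assoc, Rinv_l in Hp by lra; lra. }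
destruct (noise_sum_le (spectral_sum lam) K (2 - 1 / beta) gamma etabar HK HK0 HKa
  ltac:(lra) Hgamma Hp) as [C [HC Hbound]].
exists C; split; [exact HC|].
intros N eta0 He Hbar HT.
pose proof (tk_N_le eta0 gamma N He ltac:(lra)).
change (noiseN lam eta0 gamma N) with (noise_sum (spectral_sum lam) eta0 gamma N).
replace (1 - 1 / beta) with (2 - 1 / beta - 1) by ring.
eapply Rle_trans; [apply Hbound; lra|].
apply Rmult_le_compat_l; [apply Rmult_le_pos; lra|].
apply Rle_Rpower_l_nonpos; [|lra].
assert (0 < gamma / (gamma + 1)) by pos.
pose proof (Rmin_glb_lt (2 - 1 / beta - 1) (gamma / (gamma + 1)) 0 ltac:(lra) ltac:(lra)); lra.
Qed.
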